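(* Let $\gamma:=\prod_{j=1}^\infty(1-2^{-j})$. For every integer $a\ge 1$ there is a sequence of examples, indexed by $m\to\infty$, each consisting of integers $n$ and a set $U\subseteq\mathbb{F}_2^n\setminus\{0\}$ of $|U|=2^m$ distinct nonzero vectors, such that for a uniformly random linear map $B:\mathbb{F}_2^n\to\mathbb{F}_2^m$, \[ \liminf_{m\to\infty}\Pr\left[|\{u\in U: Bu=0\}|>2^a-2\right]\ge\gamma^{-1}2^{-a^2}(1-2^{-a})^2. \]
   Context: A uniformly random linear map $\mathbb{F}_2^n\to\mathbb{F}_2^m$ is one chosen uniformly among all linear maps. *)

From mathcomp Require Import all_boot all_order all_algebra.
From mathcomp Require Import all_classical all_reals all_analysis.
Set Implicit Arguments. Unset Strict Implicit. Unset Printing Implicit Defensive.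
Import Order.TTheory GRing.Theory Num.Theory.
Local Open Scope ring_scope.

Definition gamma_const (R : realType) : R :=
  limn (fun N : nat => \prod_(1 <= j < N.+1) (1 - (2%:R : R) ^- j)).

Definition kernel_hits (m n : nat) (B : 'M['F_2]_(m, n))
  (U : {set 'cV['F_2]_n}) : nat :=
  #|[set u in U | B *m u == 0]|.

Definition prob_hits_gt (R : realType) (m n : nat)
  (U : {set 'cV['F_2]_n}) (k : nat) : R :=
  (#|[set B : 'M['F_2]_(m, n) | (k < kernel_hits B U)%N]|%:R)
  / (#|{: 'M['F_2]_(m, n)}|%:R).

(* A uniform B : F_2^(1+m) -> F_2^m is a pair [c | M] with M a uniform m x m
   matrix.  For U = {e_0} u {(0, w) : w <> 0}, every nonzero w in ker M is a hit,
   so rank M = m - a already gives 2^a - 1 hits.  Counting matrices by rank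
   through the recursion for adding a row yields
     Pr[rank M = m - a] = 2^(-a^2) Q(a, m) Q(m - a, m) / Q(0, a),
   where Q(l, u) = prod_(l < j <= u) (1 - 2^-j).  Now Q(a, m) >= 1 - 2^-a,
   Q(m - a, m) >= 1 - 2^(a-m), and gamma >= Q(0, a) (1 - 2^(-a-1))^2; the slack
   in the last bound absorbs the error 2^(a-m) as soon as m >= 3a + 2. *)

From mathcomp Require Import all_boot all_order all_algebra.
From mathcomp Require Import all_classical all_reals all_analysis.
From mathcomp Require Import mxabelem.
From mathcomp Require Import ring lra zify.
Set Implicit Arguments. Unset Strict Implicit. Unset Printing Implicit Defensive.
Import Order.TTheory GRing.Theory Num.Theory numFieldNormedType.Exports.
Local Open Scope ring_scope.

Lemma mxrank_col_mx_row (F : fieldType) m k (v : 'rV[F]_m) (A : 'M[F]_(k, m)) :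
  \rank (col_mx v A) = (\rank A + ~~ (v <= A)%MS)%N.
Proof.
rewrite -addsmxE; have [vA | vNA] := boolP (v <= A)%MS.
  by rewrite (addsmx_idPr vA) addn0.
have lt_rank : (\rank A < \rank (v + A))%N.
  by apply: rank_ltmx; rewrite ltmxE addsmxSr addsmx_sub submx_refl andbT vNA.
have [le_rank _] := mxrank_adds_leqif v A.
have rank_v : \rank v = 1%N.
  by rewrite rank_rV; case: eqP => // v0; rewrite v0 sub0mx in vNA.
by apply/eqP; rewrite eqn_leq addn1 lt_rank andbT; move: le_rank; rewrite rank_v add1n.
Qed.

Section RankCount.
Variable F : finFieldType.
Local Notation q := #|F|.

Lemma card_rank_col_mx m k (r : nat) (A : 'M[F]_(k, m)) :
  #|[set v : 'rV_m | \rank (col_mx v A) == r]| =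
  ((\rank A == r) * q ^ r + ((\rank A).+1 == r) * (q ^ m - q ^ \rank A))%N.
Proof.
have [<- | ne_r] := eqVneq (\rank A) r.
  rewrite (gtn_eqF (ltnSn _)) addn0 mul1n -card_rowg; apply: eq_card => v.
  by rewrite !inE mxrank_col_mx_row; case: (v <= A)%MS; rewrite ?addn0 ?addn1 ?eqxx ?(gtn_eqF (ltnSn _)).
have [<- | ne_r1] := eqVneq (\rank A).+1 r.
  rewrite mul0n add0n mul1n -card_rowg -[m in (q ^ m)%N]mul1n -card_mx -[rowg A]finset.setCK -cardsCs.
  apply: eq_card => v; rewrite !inE mxrank_col_mx_row.
  by case: (v <= A)%MS; rewrite ?addn0 ?addn1 ?eqxx ?(ltn_eqF (ltnSn _)).
apply/eqP; rewrite cards_eq0; apply/eqP/setP => v; rewrite !inE mxrank_col_mx_row.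
by case: (v <= A)%MS; rewrite ?addn0 ?addn1 /= ?(negbTE ne_r) ?(negbTE ne_r1).
Qed.

Definition rank_count m k r := #|[set A : 'M[F]_(k, m) | \rank A == r]|.

Lemma rank_count0 m k : rank_count m k 0 = 1%N.
Proof.
rewrite /rank_count (_ : [set _ | _] = [set 0]) ?cards1 //.
by apply/setP => A; rewrite !inE mxrank_eq0.
Qed.

Lemma rank_count_gt m k r : (k < r)%N -> rank_count m k r = 0%N.
Proof.
move=> lt_k_r; apply/eqP; rewrite cards_eq0; apply/eqP/setP => A; rewrite !inE.
by apply: contraTF lt_k_r => /eqP <-; rewrite -leqNgt rank_leq_row.
Qed.

Lemma rank_countS m k s : rank_count m k.+1 s.+1 =
  (rank_count m k s.+1 * q ^ s.+1 + rank_count m k s * (q ^ m - q ^ s))%N.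
Proof.
have count_eq (r : nat) : rank_count m k r = (\sum_(A : 'M[F]_(k, m)) (\rank A == r))%N.
  by rewrite /rank_count -sum1_card big_mkcond; apply: eq_bigr => A _; rewrite inE.
have split_top_row (r : nat) : rank_count m k.+1 r =
    (\sum_(A : 'M[F]_(k, m)) #|[set v : 'rV_m | \rank (col_mx v A) == r]|)%N.
  rewrite /rank_count -sum1_card (partition_big (@dsubmx _ 1 k m) xpredT) //=.
  apply: eq_bigr => A _; rewrite -sum1_card (reindex (col_mx^~ A)) /=.
    by apply: eq_bigl => v; rewrite !inE col_mxKd eqxx andbT.
  exists usubmx => [v _ | B]; first by rewrite col_mxKu.
  by rewrite inE => /andP[_ /eqP <-]; rewrite vsubmxK.
rewrite split_top_row !count_eq big_distrl big_distrl -big_split /=.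
by apply: eq_bigr => A _; rewrite card_rank_col_mx eqSS; have [->|] := eqVneq (\rank A) s.
Qed.

Lemma card_kernel n m (M : 'M[F]_(n, m)) :
  #|[set w : 'cV_m | M *m w == 0]| = (q ^ (m - \rank M))%N.
Proof.
rewrite -mxrank_tr -mxrank_ker -card_rowg -[RHS](card_imset _ (@trmx_inj _ _ _)).
apply: eq_card => w; rewrite inE; apply/eqP/imsetP => [Mw0 | [v]].
  by exists w^T; rewrite ?trmxK // mem_rowg sub_kermx -trmx_mul Mw0 trmx0.
by rewrite mem_rowg sub_kermx => /eqP vM0 ->; rewrite -[M]trmxK -trmx_mul vM0 trmx0.
Qed.

Lemma card_rank_rsubmx k n m (r : nat) :
  #|[set B : 'M[F]_(k, n + m) | \rank (rsubmx B) == r]| =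
  (q ^ (k * n) * rank_count m k r)%N.
Proof.
rewrite /rank_count -(card_mx F k n) -cardsT -cardsX.
have row_mx_inj : injective (fun LM : 'M[F]_(k, n) * 'M[F]_(k, m) => row_mx LM.1 LM.2).
  by move=> [L1 M1] [L2 M2] /= /eq_row_mx [-> ->].
rewrite -(card_imset _ row_mx_inj); apply: eq_card => B; rewrite inE.
apply/idP/imsetP => [rB | [[L M]]]; last by rewrite !inE => /= rM ->; rewrite row_mxKr.
by exists (lsubmx B, rsubmx B); rewrite ?hsubmxK // !inE.
Qed.

End RankCount.

Definition qprod (R : pzRingType) (x : R) (l u : nat) : R :=
  \prod_(l.+1 <= j < u.+1) (1 - x ^+ j).

Section QProd.
Variables (R : pzRingType) (x : R).

Lemma qprod_id l : qprod x l l = 1.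
Proof. by rewrite /qprod big_geq. Qed.

Lemma qprodSr l u : (l <= u)%N -> qprod x l u.+1 = qprod x l u * (1 - x ^+ u.+1).
Proof. by move=> le_lu; rewrite /qprod big_nat_recr. Qed.

Lemma qprodSl l u : (l < u)%N -> qprod x l u = (1 - x ^+ l.+1) * qprod x l.+1 u.
Proof. by move=> lt_lu; rewrite /qprod big_ltn. Qed.

Lemma qprod_cat l k u : (l <= k <= u)%N -> qprod x l u = qprod x l k * qprod x k u.
Proof. by move=> /andP[le_lk le_ku]; rewrite /qprod (@big_cat_nat _ _ _ k.+1). Qed.

End QProd.

Section RankCountClosedForm.
Variables (F : finFieldType) (R : comPzRingType) (x : R) (m : nat).
Hypothesis card_mulx : #|F|%:R * x = 1.
Local Notation q := #|F|.

Lemma card_expr_mulx n : (q ^ n)%:R * x ^+ n = 1.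
Proof. by rewrite natrX -exprMn card_mulx expr1n. Qed.

(* With x = 1/q this is Pr[rank = r] for a uniform k x m matrix, multiplied by
   qprod x 0 (k - r) so that the closed form needs no division. *)
Let scaled_count (k r : nat) :=
  (rank_count F m k r)%:R * x ^+ (k * m) * qprod x 0 (k - r).

Let count_formula (k r : nat) :=
  x ^+ ((k - r) * (m - r)) * qprod x (m - r) m * qprod x r k.

Lemma scaled_countS k s : (s <= k)%N -> (s < m)%N ->
  scaled_count k.+1 s.+1 = scaled_count k s.+1 * x ^+ (m - s.+1) * (1 - x ^+ (k - s))
                           + scaled_count k s * (1 - x ^+ (m - s)).
Proof.
move=> le_sk lt_sm; have q_gt0 : (0 < q)%N by apply/card_gt0P; exists 0.
rewrite /scaled_count subSS rank_countS natrD !natrM natrB; last first.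
  by rewrite leq_pexp2l // ltnW.
set N1 := (rank_count F m k s.+1)%:R; set N0 := (rank_count F m k s)%:R.
have top_row : N1 * qprod x 0 (k - s) = N1 * qprod x 0 (k - s.+1) * (1 - x ^+ (k - s)).
  have [lt_sk | le_ks] := ltnP s k; last by rewrite /N1 rank_count_gt ?mul0r.
  by rewrite -(subnSK lt_sk) -mulrA -qprodSr.
have xm_split : x ^+ m = x ^+ s.+1 * x ^+ (m - s.+1) by rewrite -exprD subnKC.
have xm_split' : x ^+ m = x ^+ s * x ^+ (m - s) by rewrite -exprD subnKC // ltnW.
rewrite mulSn exprD.
have -> : (N1 * (q ^ s.+1)%:R + N0 * ((q ^ m)%:R - (q ^ s)%:R)) * (x ^+ m * x ^+ (k * m))
            * qprod x 0 (k - s)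
  = N1 * qprod x 0 (k - s) * ((q ^ s.+1)%:R * x ^+ s.+1) * x ^+ (m - s.+1) * x ^+ (k * m)
    + N0 * qprod x 0 (k - s) * ((q ^ m)%:R * x ^+ m - (q ^ s)%:R * x ^+ s * x ^+ (m - s))
      * x ^+ (k * m).
  by rewrite -[(q ^ s)%:R * _ * _]mulrA -xm_split' xm_split; ring.
by rewrite !card_expr_mulx mulr1 top_row; ring.
Qed.

Lemma count_formulaS k s : (s <= k)%N -> (s < m)%N ->
  count_formula k.+1 s.+1 = count_formula k s.+1 * x ^+ (m - s.+1) * (1 - x ^+ (k - s))
                            + count_formula k s * (1 - x ^+ (m - s)).
Proof.
move=> le_sk lt_sm; rewrite /count_formula !subSS.
set e := (m - s.+1)%N; have -> : (m - s)%N = e.+1 by rewrite /e subnSK.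
rewrite (qprodSl x (_ : e < m)%N); last by rewrite /e; lia.
move: le_sk; rewrite leq_eqVlt => /orP[/eqP <- | lt_sk].
  have -> : (s - s.+1)%N = 0%N by lia.
  by rewrite subnn !qprod_id !mul0n expr0 subrr; ring.
set c := (k - s.+1)%N; have -> : (k - s)%N = c.+1 by rewrite /c subnSK.
rewrite (qprodSl x lt_sk) (qprodSr x lt_sk).
have -> : x ^+ k.+1 = x ^+ c.+1 * x ^+ s.+1 by rewrite -exprD; congr (_ ^+ _); lia.
have -> : x ^+ (c.+1 * e) = x ^+ (c * e) * x ^+ e by rewrite -exprD mulSn addnC.
have -> : x ^+ (c.+1 * e.+1) = x ^+ (c * e) * x ^+ e * x ^+ c.+1.
  by rewrite -!exprD; congr (_ ^+ _); lia.
ring.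
Qed.

Lemma rank_count_closed_form k r : (r <= k)%N -> (r <= m)%N ->
  (rank_count F m k r)%:R * x ^+ (k * m) * qprod x 0 (k - r) =
  x ^+ ((k - r) * (m - r)) * qprod x (m - r) m * qprod x r k.
Proof.
have col0 k' : scaled_count k' 0 = count_formula k' 0.
  by rewrite /scaled_count /count_formula rank_count0 !subn0 !qprod_id mul1r mulr1.
suff eq_formula : forall k' r', (r' <= k')%N -> (r' <= m)%N ->
    scaled_count k' r' = count_formula k' r' by exact: eq_formula.
elim=> [|k' IH] [|s] // le_sk lt_sm; rewrite ?col0 //.
rewrite scaled_countS // count_formulaS // (IH s le_sk (ltnW lt_sm)); congr (_ + _).
move: le_sk; rewrite ltnS leq_eqVlt => /orP[/eqP -> | lt_sk]; last by rewrite IH.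
(* For s = k the factor 1 - x ^+ 0 vanishes: the out-of-range r = k.+1 never matters. *)
by rewrite subnn expr0 subrr !mulr0.
Qed.

End RankCountClosedForm.

Section QProdBounds.
Variables (R : realFieldType) (x : R).
Hypotheses (x_ge0 : 0 <= x) (x_le_half : 2 * x <= 1).

Let x_lt1 : x < 1. Proof. have := x_ge0; have := x_le_half; lra. Qed.

Lemma qprod_gt0 l u : 0 < qprod x l u.
Proof.
rewrite /qprod big_nat; apply: prodr_gt0 => j /andP[lt_lj _].
by rewrite subr_gt0 exprn_ilt1 // gtn_eqF // (leq_trans _ lt_lj).
Qed.

Lemma qprod_ge l u : 1 - x ^+ l <= qprod x l u.
Proof.
have [lt_ul | le_lu] := ltnP u l; first by rewrite /qprod big_geq ?gerBl ?exprn_ge0 // ltnW.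
suff le_u : 1 - x ^+ l + x ^+ u <= qprod x l u.
  by apply: le_trans le_u; rewrite lerDl exprn_ge0.
elim: u le_lu => [|u IH]; first by rewrite leqn0 => /eqP ->; rewrite qprod_id subrK.
rewrite leq_eqVlt => /orP[/eqP -> | le_lu]; first by rewrite qprod_id subrK.
rewrite qprodSr //; apply: le_trans (_ : (1 - x ^+ l + x ^+ u) * (1 - x ^+ u.+1) <= _).
  have xu_le_xl : x ^+ u <= x ^+ l by rewrite ler_wiXn2l // ltW.
  have xu_ge0 : 0 <= x * x ^+ u by rewrite mulr_ge0 ?exprn_ge0.
  have := exprn_ge0 u x_ge0; have := x_le_half; rewrite exprS; nra.
by apply: ler_wpM2r; [rewrite subr_ge0 exprn_ile1 // ltW | exact: IH].
Qed.

End QProdBounds.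

Section QProdLimit.
Variables (R : realType) (x : R).
Hypotheses (x_ge0 : 0 <= x) (x_le_half : 2 * x <= 1).

Lemma qprod_le_limn a : qprod x 0 a * (1 - x ^+ a.+1) ^+ 2 <= limn (qprod x 0).
Proof.
have factor_ge0 j : 0 <= 1 - x ^+ j.
  by rewrite subr_ge0 exprn_ile1 //; have := x_le_half; have := x_ge0; lra.
have qprod_ge0 l u : 0 <= qprod x l u by exact/ltW/qprod_gt0.
apply: limr_ge.
  apply: nonincreasing_is_cvgn.
    apply/nonincreasing_seqP => N; rewrite qprodSr // ler_piMr ?gerBl ?exprn_ge0 //.
  by exists 0 => _ [N _ <-].
exists a.+1 => // N /= lt_aN.
rewrite (@qprod_cat _ x 0 a N) ?leq0n ?(ltnW lt_aN) // ler_pM2l ?qprod_gt0 //.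
rewrite (qprodSl _ lt_aN) expr2; apply: (ler_wpM2l (factor_ge0 _)).
exact: qprod_ge.
Qed.

End QProdLimit.

Lemma limn_inf_ge_near (R : realType) (u : R^nat) c : bounded_fun u ->
  (\forall n \near \oo%classic, c <= u n) -> c <= limn_inf u.
Proof.
move=> bnd_u [N _ c_le_u]; rewrite limn_infE //.
apply: le_trans (_ : c <= infs u N) _.
  apply: lb_le_inf; first by exists (u N), N => /=.
  by move=> _ [n /= le_Nn <-]; exact: c_le_u.
by apply: ub_le_sup; [exact: bounded_fun_has_ubound_infs | exists N].
Qed.

Lemma gamma_ratio_le (R : realFieldType) (G P X A B u eps : R) :
  0 < P -> P * (1 - u) ^+ 2 <= G -> 0 <= u -> 2 * u <= 1 ->
  0 <= eps <= u ^+ 2 -> 0 <= X -> 1 - 2 * u <= A -> 1 - eps <= B ->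
  G^-1 * X * (1 - 2 * u) ^+ 2 <= X * A * B / P.
Proof.
move=> P_gt0 PG u_ge0 u_le_half /andP[eps_ge0 eps_le] X_ge0 A_ge B_ge.
set Y := 1 - 2 * u; have Y_ge0 : 0 <= Y by rewrite /Y; lra.
have G_gt0 : 0 < G by apply: lt_le_trans PG; rewrite mulr_gt0 // expr2; nra.
have absorb : Y <= (1 - eps) * (1 - u) ^+ 2.
  have : eps * (1 - u) ^+ 2 <= eps by rewrite ler_piMr // expr_le1 //; lra.
  rewrite /Y expr2 in eps_le *; nra.
have YP_le : Y * P <= (1 - eps) * G.
  apply: le_trans (_ : (1 - eps) * (P * (1 - u) ^+ 2) <= _); last first.
    by rewrite ler_wpM2l //; nra.
  by rewrite mulrCA [Y * P]mulrC (ler_wpM2l (ltW P_gt0)).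
apply: le_trans (_ : X * Y * (1 - eps) / P <= _); last first.
  apply: ler_wpM2r; first by rewrite invr_ge0 ltW.
  rewrite -!mulrA; apply: (ler_wpM2l X_ge0).
  by apply: ler_pM => //; rewrite subr_ge0; nra.
rewrite ler_pdivlMr // -mulrA.
apply: le_trans (_ : G^-1 * X * (Y * ((1 - eps) * G)) <= _).
  rewrite -!mulrA; apply: ler_wpM2l; first by rewrite invr_ge0 ltW.
  by apply: (ler_wpM2l X_ge0); apply: (ler_wpM2l Y_ge0).
have G_neq0 : G != 0 by rewrite gt_eqF.
by rewrite le_eqVlt; apply/orP; left; apply/eqP; field.
Qed.

(* e_0 and the (0, w) with w <> 0: each nonzero w in the kernel of the last m
   columns of B is a hit. *)
Definition lifted_vectors m : {set 'cV['F_2]_(1 + m)} :=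
  [set col_mx (if w == 0 then 1 else 0 : 'cV['F_2]_1) w | w : 'cV['F_2]_m].

Lemma lifted_vectors_neq0 m : 0 \notin lifted_vectors m.
Proof.
apply/imsetP => -[w _ /esym/eqP]; rewrite col_mx_eq0.
by case: ifP => [_ | /negbT w_neq0] /andP[]; [rewrite oner_eq0 | move=> _; apply/negP].
Qed.

Lemma card_lifted_vectors m : #|lifted_vectors m| = (2 ^ m)%N.
Proof.
rewrite card_imset; first by rewrite card_mx card_ord muln1.
by move=> w1 w2 /eq_col_mx[_ ->].
Qed.

Lemma kernel_hits_lifted_vectors m (B : 'M['F_2]_(m, 1 + m)) :
  (2 ^ (m - \rank (rsubmx B)) - 1 <= kernel_hits B (lifted_vectors m))%N.
Proof.
have -> : (2 ^ (m - \rank (rsubmx B)))%N = #|[set w : 'cV_m | rsubmx B *m w == 0]|.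
  by rewrite card_kernel card_Fp.
rewrite (cardsD1 0) inE mulmx0 eqxx addKn.
have lift_inj : injective (fun w : 'cV['F_2]_m => col_mx (0 : 'cV['F_2]_1) w).
  by move=> w1 w2 /eq_col_mx[_ ->].
rewrite -(card_imset _ lift_inj); apply: subset_leq_card; apply/fintype.subsetP => _ /imsetP[w w_ker ->].
move: w_ker; rewrite !inE => /andP[w_neq0 Mw0]; apply/andP; split.
  by apply/imsetP; exists w; rewrite ?(negbTE w_neq0).
by rewrite -[B]hsubmxK mul_row_col mulmx0 add0r.
Qed.

Section Probability.
Variable R : realType.
Local Notation half := (2^-1 : R).

Lemma prob_hits_gt_bounded (n : nat -> nat) (U : forall m, {set 'cV['F_2]_(n m)}) k :
  bounded_fun (fun m => prob_hits_gt R m (U m) k).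
Proof.
have ? : ProperFilter (globally [set: nat]) by exact: (@globally_properfilter _ _ 0%N).
apply/ex_bound; exists 1 => m _ /=; rewrite /prob_hits_gt ger0_norm ?divr_ge0 //.
by rewrite ler_pdivrMr ?mul1r ?ler_nat ?max_card // ltr0n card_mx card_Fp // expn_gt0.
Qed.

Lemma prob_hits_gt_lifted_ge m a : (1 <= a <= m)%N ->
  (rank_count 'F_2 m m (m - a)%N)%:R / (2 ^ (m * m))%N%:R
    <= prob_hits_gt R m (lifted_vectors m) (2 ^ a - 2)%N.
Proof.
move=> /andP[a_gt0 le_am].
have rank_hits : [set B : 'M['F_2]_(m, 1 + m) | \rank (rsubmx B) == (m - a)%N]
    \subset [set B | 2 ^ a - 2 < kernel_hits B (lifted_vectors m)]%N.
  apply/fintype.subsetP => B; rewrite !inE => /eqP rank_B.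
  have := kernel_hits_lifted_vectors B; rewrite rank_B subKn //.
  have : (2 <= 2 ^ a)%N by rewrite -{1}(expn1 2) leq_exp2l.
  lia.
move: (subset_leq_card rank_hits); rewrite card_rank_rsubmx card_Fp // muln1 => le_card.
rewrite /prob_hits_gt card_mx card_Fp //.
apply: le_trans (_ : (2 ^ m * rank_count 'F_2 m m (m - a))%N%:R / (2 ^ (m * (1 + m)))%N%:R <= _).
  rewrite mulnDr muln1 expnD !natrM -mulf_div divff ?mul1r // pnatr_eq0 expn_eq0.
by rewrite ler_wpM2r ?invr_ge0 ?ler0n // ler_nat.
Qed.

Let half_ge0 : 0 <= half. Proof. by rewrite invr_ge0 ler0n. Qed.

Let double_half : 2 * half = 1. Proof. by rewrite mulfV ?pnatr_eq0. Qed.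

Let half_le_half : 2 * half <= 1. Proof. by rewrite double_half. Qed.

Lemma gamma_constE : gamma_const R = limn (qprod half 0).
Proof.
rewrite /gamma_const (_ : (fun N => _) = qprod half 0) //.
by apply: funext => N; apply: eq_bigr => j _; rewrite exprVn.
Qed.

Lemma prob_hits_gt_lifted_closed m a : (1 <= a <= m)%N ->
  half ^+ (a * a) * qprod half a m * qprod half (m - a) m / qprod half 0 a
    <= prob_hits_gt R m (lifted_vectors m) (2 ^ a - 2)%N.
Proof.
move=> le_1am; apply: le_trans (prob_hits_gt_lifted_ge le_1am).
have /andP[_ le_am] := le_1am.
have card_mul_half : #|'F_2|%:R * half = 1 by rewrite card_Fp // double_half.
have := rank_count_closed_form (m := m) card_mul_half (leq_subr a m) (leq_subr a m).
rewrite subKn // => <-; rewrite natrX exprVn mulfK //.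
by rewrite gt_eqF // qprod_gt0.
Qed.

Lemma prob_hits_gt_lifted_large m a : (1 <= a)%N -> (3 * a + 2 <= m)%N ->
  (gamma_const R)^-1 * (2%:R : R) ^- (a ^ 2) * (1 - (2%:R : R) ^- a) ^+ 2
    <= prob_hits_gt R m (lifted_vectors m) (2 ^ a - 2)%N.
Proof.
move=> a_gt0 le_m; have le_1am : (1 <= a <= m)%N by rewrite a_gt0; lia.
apply: le_trans (prob_hits_gt_lifted_closed le_1am).
rewrite gamma_constE mulnn -!exprVn.
have half_pow : half ^+ a = 2 * half ^+ a.+1 by rewrite exprS mulrA double_half mul1r.
have half_le1 : half <= 1 by move: half_ge0 half_le_half; lra.
rewrite half_pow; apply: (gamma_ratio_le (eps := half ^+ (m - a))).
- exact: qprod_gt0.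
- exact: qprod_le_limn.
- exact: exprn_ge0.
- by rewrite -half_pow exprn_ile1.
- apply/andP; split; first exact: exprn_ge0.
  by rewrite -exprM; apply: ler_wiXn2l => //; lia.
- exact: exprn_ge0.
- by rewrite -half_pow qprod_ge.
- exact: qprod_ge.
Qed.

End Probability.

Theorem proposition2p4 (R : realType) (a : nat) (ha : (1 <= a)%N) :
  exists (n : nat -> nat) (U : forall m : nat, {set 'cV['F_2]_(n m)}),
    (forall m : nat, 0 \notin U m /\ #|U m| = (2 ^ m)%N) /\
    (gamma_const R)^-1 * (2%:R : R) ^- (a ^ 2) * (1 - (2%:R : R) ^- a) ^+ 2
      <= limn_inf (fun m : nat => prob_hits_gt R m (U m) (2 ^ a - 2)%N).
Proof.
exists (fun m => (1 + m)%N), lifted_vectors; split.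
  by move=> m; split; [exact: lifted_vectors_neq0 | exact: card_lifted_vectors].
apply: limn_inf_ge_near; first exact: prob_hits_gt_bounded.
near=> m; apply: prob_hits_gt_lifted_large => //.
by near: m; exact: nbhs_infty_ge.
Unshelve. all: by end_near.
Qed.
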